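(* Let $\bm\theta = (\theta^1,\dots,\theta^k) \in (0,1)^k$ with a unique best treatment $d^* = \arg\max_d \theta^d$. Then \[ \Gamma^*(\bm\theta) \ge \frac{1}{4 H(\bm\theta)}, \qquad \text{where } H(\bm\theta) = \sum_{d \ne d^*} \frac{1}{(\theta^{d^*} - \theta^d)^2}. \]
   Context: Let $d_{\mathrm{KL}}(p,q) = p\log(p/q) + (1-p)\log((1-p)/(1-q))$ be the KL divergence between Bernoulli distributions with means $p$ and $q$. For allocation shares $\bm\rho = (\rho^1,\dots,\rho^k)$ and $j \neq d^*$ define $G_j(\rho^{d^*},\rho^j) = \min_{x \in [\theta^j, \theta^{d^*}]} \rho^{d^*} d_{\mathrm{KL}}(x,\theta^{d^*}) + \rho^j d_{\mathrm{KL}}(x,\theta^j)$. Then $\Gamma^*(\bm\theta)$ is the optimal value of the problem: maximize $\Gamma$ over $\Gamma$ and $\bm\rho$ subject to $G_j(\rho^{d^*},\rho^j) - \Gamma \ge 0$ for all $j \ne d^*$, $\sum_{i=1}^k \rho^i = 1$, $\rho^{d^*} = 1/2$, and $\rho^j \ge 0$ for all $j$. *)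

From HB Require Import structures.
From mathcomp Require Import all_boot all_order all_algebra.
From mathcomp Require Import all_classical all_reals all_analysis.
Set Implicit Arguments. Unset Strict Implicit. Unset Printing Implicit Defensive.
Import Order.TTheory GRing.Theory Num.Theory.
Local Open Scope classical_set_scope.
Local Open Scope ring_scope.

Definition dKL (R : realType) (p q : R) : R :=
  p * ln (p / q) + (1 - p) * ln ((1 - p) / (1 - q)).

(* G_j(rho^{d*}, rho^j) = min over x in [theta^j, theta^{d*}] of
   rho^{d*} d_KL(x, theta^{d*}) + rho^j d_KL(x, theta^j)
   (the minimum is attained by continuity, so it is the infimum). *)
Definition Gfun (R : realType) (thstar thj rhostar rhoj : R) : R :=
  inf [set rhostar * dKL x thstar + rhoj * dKL x thj | x in [set x : R | thj <= x <= thstar]].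

Definition Gamma_star (R : realType) (k : nat) (theta : 'I_k -> R) (dstar : 'I_k) : R :=
  sup [set g : R | exists rho : 'I_k -> R,
        [/\ (forall j, j != dstar -> 0 <= Gfun (theta dstar) (theta j) (rho dstar) (rho j) - g),
            \sum_(i < k) rho i = 1,
            rho dstar = 1 / 2 &
            (forall j, 0 <= rho j)]].

Definition Hcomp (R : realType) (k : nat) (theta : 'I_k -> R) (dstar : 'I_k) : R :=
  \sum_(d < k | d != dstar) 1 / (theta dstar - theta d) ^+ 2.

From HB Require Import structures.
From mathcomp Require Import all_boot all_order all_algebra.
From mathcomp Require Import all_classical all_reals all_analysis.
From mathcomp Require Import lra ring.
Import Order.TTheory GRing.Theory Num.Theory.
Local Open Scope ring_scope.
Set Implicit Arguments.
Unset Strict Implicit.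
Unset Printing Implicit Defensive.

(** The Bernoulli divergence dominates the squared Hellinger distance, which
    in turn dominates the squared difference of the means:
    [(p - q)^2 <= d_KL(p, q)].  Hence, for [x] between [theta^j] and
    [theta^{d*}] and [rho^j <= 1/2 = rho^{d*}], the objective defining [G_j]
    is at least [rho^j ((x - theta^{d*})^2 + (x - theta^j)^2)
    >= rho^j (theta^{d*} - theta^j)^2 / 2].  The allocation
    [rho^j = (theta^{d*} - theta^j)^-2 / (2 H)] equalizes these bounds at
    [1 / (4 H)], so this value is feasible for the program. *)

Section BernoulliDivergence.
Variable R : realType.
Implicit Types a b c d p q s t x ts tj rs rj g : R.

Lemma mul_ln_div_ge p q : 0 < p -> 0 < q ->
  2 * p - 2 * (Num.sqrt p * Num.sqrt q) <= p * ln (p / q).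
Proof.
move=> p0 q0; set a := Num.sqrt p; set b := Num.sqrt q.
have a0 : 0 < a by rewrite sqrtr_gt0.
have b0 : 0 < b by rewrite sqrtr_gt0.
have ba0 : 0 < b / a by rewrite divr_gt0.
have pa : p = a ^+ 2 by rewrite sqr_sqrtr // ltW.
have -> : p / q = (b / a)^-1 ^+ 2.
  by rewrite invf_div expr_div_n !sqr_sqrtr ?ltW.
rewrite lnXn ?invr_gt0 // lnV ?posrE // -mulr_natr.
have := @le_ln1Dx R (b / a - 1); rewrite subrKC => /(_ ltac:(lra)) ln_ba.
have ab : a ^+ 2 * (b / a) = a * b by field; rewrite gt_eqF.
rewrite pa; nra.
Qed.

(* No sign conditions are needed: [u := a^2 + b^2] and [2 - u = c^2 + d^2]
   are both nonnegative, and [(a^2 - b^2)^2] is at most [2 u (a - b)^2] and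
   at most [2 (2 - u) (c - d)^2], while [u (2 - u) <= 1]. *)
Lemma sqr_subr_sqr_le_hellinger a b c d :
  a ^+ 2 + c ^+ 2 = 1 -> b ^+ 2 + d ^+ 2 = 1 ->
  (a ^+ 2 - b ^+ 2) ^+ 2 <= (a - b) ^+ 2 + (c - d) ^+ 2.
Proof.
move=> ac1 bd1.
set D := (a ^+ 2 - b ^+ 2) ^+ 2; set X := (a - b) ^+ 2; set Y := (c - d) ^+ 2.
set u := a ^+ 2 + b ^+ 2.
have u_ge0 : 0 <= u by rewrite addr_ge0 ?sqr_ge0.
have Su_ge0 : 0 <= 2 - u by rewrite /u; nra.
have X_ge0 : 0 <= X := sqr_ge0 _.
have Y_ge0 : 0 <= Y := sqr_ge0 _.
have DX : D <= 2 * u * X.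
  have -> : D = X * (a + b) ^+ 2 by rewrite /D /X; ring.
  by have := sqr_ge0 (a - b); rewrite /u; nra.
have DY : D <= 2 * (2 - u) * Y.
  have -> : D = Y * (c + d) ^+ 2.
    by rewrite /D /Y (_ : a ^+ 2 - b ^+ 2 = d ^+ 2 - c ^+ 2); [ring | lra].
  by have := sqr_ge0 (c - d); rewrite /u; nra.
have uSu : u * (2 - u) <= 1 by have := sqr_ge0 (u - 1); nra.
nra.
Qed.

Lemma dKL_ge_sqr p q : 0 < p < 1 -> 0 < q < 1 -> (p - q) ^+ 2 <= dKL p q.
Proof.
move=> /andP[p0 p1] /andP[q0 q1].
have p1' : 0 < 1 - p by lra.
have q1' : 0 < 1 - q by lra.
have := mul_ln_div_ge p0 q0; have := mul_ln_div_ge p1' q1'; rewrite /dKL.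
set a := Num.sqrt p; set b := Num.sqrt q.
set c := Num.sqrt (1 - p); set d := Num.sqrt (1 - q).
have sqrK x : 0 < x -> Num.sqrt x ^+ 2 = x by move=> x0; rewrite sqr_sqrtr ?ltW.
have := @sqr_subr_sqr_le_hellinger a b c d.
have -> : (a - b) ^+ 2 + (c - d) ^+ 2
    = (a ^+ 2 + c ^+ 2) + (b ^+ 2 + d ^+ 2) - 2 * (a * b) - 2 * (c * d) by ring.
rewrite !sqrK // => /(_ ltac:(lra) ltac:(lra)); lra.
Qed.

Lemma dKL_ge0 p q : 0 < p < 1 -> 0 < q < 1 -> 0 <= dKL p q.
Proof. by move=> hp hq; apply: le_trans (dKL_ge_sqr hp hq); apply: sqr_ge0. Qed.

Lemma dKLxx x : 0 < x < 1 -> dKL x x = 0.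
Proof.
by move=> /andP[x0 x1]; rewrite /dKL !divff ?ln1 ?mulr0 ?addr0 ?subr_eq0 ?gt_eqF.
Qed.

Lemma weighted_sqr_ge s t x a b : 0 <= b <= a ->
  b * (s - t) ^+ 2 / 2 <= a * (x - s) ^+ 2 + b * (x - t) ^+ 2.
Proof.
move=> /andP[b0 ba].
have st : (s - t) ^+ 2 / 2 <= (x - s) ^+ 2 + (x - t) ^+ 2.
  by have := sqr_ge0 (2 * x - s - t); nra.
have := sqr_ge0 (x - s); nra.
Qed.

Lemma Gfun_ge ts tj rs rj g : tj <= ts ->
  (forall x, tj <= x <= ts -> g <= rs * dKL x ts + rj * dKL x tj) ->
  g <= Gfun ts tj rs rj.
Proof.
move=> tjs ge_g; apply: lb_le_inf => [|_ [x hx <-]]; last exact: ge_g.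
by exists (rs * dKL tj ts + rj * dKL tj tj), tj => //=; rewrite lexx tjs.
Qed.

Lemma Gfun_le_dKL ts tj rs rj : 0 < tj -> tj <= ts -> ts < 1 ->
  0 <= rs -> 0 <= rj -> Gfun ts tj rs rj <= rs * dKL tj ts.
Proof.
move=> tj0 tjs ts1 rs0 rj0.
have -> : rs * dKL tj ts = rs * dKL tj ts + rj * dKL tj tj.
  by rewrite dKLxx ?mulr0 ?addr0 // tj0; lra.
apply: ge_inf; last by exists tj => //=; rewrite lexx tjs.
exists 0 => _ [x /andP[tjx xts] <-].
by rewrite addr_ge0 // mulr_ge0 // dKL_ge0 //; apply/andP; split; lra.
Qed.

Lemma Gfun_ge_sqr ts tj rs rj : 0 < tj -> tj <= ts -> ts < 1 -> 0 <= rj <= rs ->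
  rj * (ts - tj) ^+ 2 / 2 <= Gfun ts tj rs rj.
Proof.
move=> tj0 tjs ts1 rj_rs; have [rj0 rjs] := andP rj_rs.
have rs0 : 0 <= rs := le_trans rj0 rjs.
have tj01 : 0 < tj < 1 by apply/andP; split; lra.
have ts01 : 0 < ts < 1 by apply/andP; split; lra.
apply: Gfun_ge => // x /andP[tjx xts].
have x01 : 0 < x < 1 by apply/andP; split; lra.
apply: le_trans (weighted_sqr_ge ts tj x rj_rs) _.
by apply: lerD; apply: ler_wpM2l; rewrite // dKL_ge_sqr.
Qed.

End BernoulliDivergence.

Section Allocation.
Variables (R : realType) (k : nat) (theta : 'I_k -> R) (dstar : 'I_k).
Hypothesis theta01 : forall d, 0 < theta d < 1.
Hypothesis theta_lt_best : forall d, d != dstar -> theta d < theta dstar.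

Let H := Hcomp theta dstar.
Let w d := 1 / (theta dstar - theta d) ^+ 2.

Lemma le_Gamma_star (rho : 'I_k -> R) g j0 : j0 != dstar ->
  (forall j, j != dstar -> g <= Gfun (theta dstar) (theta j) (rho dstar) (rho j)) ->
  \sum_(i < k) rho i = 1 -> rho dstar = 1 / 2 -> (forall j, 0 <= rho j) ->
  g <= Gamma_star theta dstar.
Proof.
move=> j0_rival g_le rho1 rho_best rho_ge0; apply: ub_le_sup; last first.
  by exists rho; split=> // j /g_le; rewrite subr_ge0.
exists (1 / 2 * dKL (theta j0) (theta dstar)) => g' [r [r_ge _ r_best r_ge0]].
move: (r_ge j0 j0_rival); rewrite subr_ge0 r_best => /le_trans; apply.
have [/andP[tj0 _] /andP[_ ts1]] := (theta01 j0, theta01 dstar).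
by apply: Gfun_le_dKL => //; exact/ltW/theta_lt_best.
Qed.

(* Without a rival the program is infeasible ([rho^{d*} = 1/2] but the shares
   sum to 1), and [sup set0 = 0]. *)
Lemma Gamma_star_no_rival : (forall d, d = dstar) -> Gamma_star theta dstar = 0.
Proof.
move=> all_best; rewrite /Gamma_star; set S := (X in sup X).
suff -> : S = set0 by exact: sup0.
apply/seteqP; split => // g [rho [_ rho1 rho_best _]]; move: rho1.
rewrite (bigD1 dstar) //= big1 ?addr0 ?rho_best => [|i]; first lra.
by rewrite (all_best i) eqxx.
Qed.

Lemma w_gt0 d : d != dstar -> 0 < w d.
Proof.
by move=> /theta_lt_best td; rewrite divr_gt0 // exprn_gt0 // subr_gt0.
Qed.

Lemma w_le_H d : d != dstar -> w d <= H.
Proof.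
move=> dd; rewrite /H /Hcomp (bigD1 d) //= lerDl.
by apply: sumr_ge0 => i /andP[/w_gt0 /ltW].
Qed.

Definition balanced_alloc d := if d == dstar then 1 / 2 else w d / (2 * H).

Section Rival.
Variable j0 : 'I_k.
Hypothesis j0_rival : j0 != dstar.

Lemma Hcomp_gt0 : 0 < H.
Proof. exact: lt_le_trans (w_gt0 j0_rival) (w_le_H j0_rival). Qed.

Lemma balanced_alloc_ge0 d : 0 <= balanced_alloc d.
Proof.
rewrite /balanced_alloc; case: ifPn => [_|/w_gt0 wd]; first lra.
by rewrite ltW // divr_gt0 // mulr_gt0 // Hcomp_gt0.
Qed.

Lemma balanced_alloc_sum : \sum_(i < k) balanced_alloc i = 1.
Proof.
rewrite (bigD1 dstar) //= {1}/balanced_alloc eqxx.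
rewrite (eq_bigr (fun i => (2 * H)^-1 * w i)) => [|i /negbTE]; last first.
  by rewrite /balanced_alloc => ->; rewrite mulrC.
rewrite -mulr_sumr (_ : \sum_(i < k | i != dstar) w i = H) //.
by field; have := Hcomp_gt0; lra.
Qed.

Lemma balanced_alloc_le_half d : d != dstar -> balanced_alloc d <= 1 / 2.
Proof.
move=> dd; rewrite /balanced_alloc (negbTE dd) ler_pdivrMr ?mulr_gt0 ?Hcomp_gt0 //.
by have := w_le_H dd; lra.
Qed.

Lemma balanced_alloc_gap d : d != dstar ->
  balanced_alloc d * (theta dstar - theta d) ^+ 2 = 1 / (2 * H).
Proof.
move=> dd; rewrite /balanced_alloc (negbTE dd) /w; field.
by rewrite gt_eqF ?Hcomp_gt0 //= subr_eq0 gt_eqF ?theta_lt_best.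
Qed.

Lemma Gfun_balanced_alloc j : j != dstar ->
  1 / (4 * H) <= Gfun (theta dstar) (theta j) (balanced_alloc dstar) (balanced_alloc j).
Proof.
move=> jd; have [/andP[tj0 _] /andP[_ ts1]] := (theta01 j, theta01 dstar).
have -> : 1 / (4 * H) = balanced_alloc j * (theta dstar - theta j) ^+ 2 / 2.
  by rewrite balanced_alloc_gap //; field; have := Hcomp_gt0; lra.
apply: Gfun_ge_sqr => //; first exact/ltW/theta_lt_best.
by rewrite balanced_alloc_ge0 {2}/balanced_alloc eqxx balanced_alloc_le_half.
Qed.

Lemma Gamma_star_ge_inv4H : 1 / (4 * H) <= Gamma_star theta dstar.
Proof.
apply: (le_Gamma_star (rho := balanced_alloc) j0_rival).
- exact: Gfun_balanced_alloc.
- exact: balanced_alloc_sum.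
- by rewrite /balanced_alloc eqxx.
- exact: balanced_alloc_ge0.
Qed.

End Rival.
End Allocation.

Theorem lemma1 (R : realType) (k : nat) (theta : 'I_k -> R) (dstar : 'I_k) :
  (forall d, 0 < theta d < 1) ->
  (forall d, d != dstar -> theta d < theta dstar) ->
  1 / (4 * Hcomp theta dstar) <= Gamma_star theta dstar.
Proof.
move=> theta01 theta_lt_best.
have [[j0 j0_rival]|no_rival] := pselect (exists j, j != dstar).
  exact: (Gamma_star_ge_inv4H theta01 theta_lt_best j0_rival).
have {}no_rival d : d = dstar by apply: contra_notP no_rival => /eqP dd; exists d.
rewrite Gamma_star_no_rival // /Hcomp big1 => [|d]; last by rewrite (no_rival d) eqxx.
by rewrite mulr0 invr0 mulr0.
Qed.
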